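(* Let $p$ be an odd prime and let $\mathcal{S}\subset\mathbb{A}^3$ be the affine surface over $\mathbb{F}_{p^2}$ defined by $y^p-y=x^{p+1}z^2+x^2z^{p+1}$. Then the number of affine $\mathbb{F}_{p^2}$-points is $$\#\mathcal{S}(\mathbb{F}_{p^2})=p\big(2(p-1)^3+2(p-1)^2+2p^2-1\big)=2p^4-2p^3+2p^2-p.$$ *)

From mathcomp Require Import all_boot all_algebra.
Set Implicit Arguments. Unset Strict Implicit. Unset Printing Implicit Defensive.
Import GRing.Theory.
Local Open Scope ring_scope.

Definition onS (F : fieldType) (p : nat) (x y z : F) : bool :=
  y ^+ p - y == x ^+ p.+1 * z ^+ 2 + x ^+ 2 * z ^+ p.+1.

Definition S_points (F : finFieldType) (p : nat) : {set F * F * F} :=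
  [set t : F * F * F | onS p t.1.1 t.1.2 t.2].

From mathcomp Require Import all_boot all_algebra all_field ring zify.
Set Implicit Arguments. Unset Strict Implicit. Unset Printing Implicit Defensive.
Import GRing.Theory.
Local Open Scope ring_scope.

(* Over F = F_(p^2) write Tr w = w^p + w for the trace to F_p. Since
   x^(p+1) z^2 + x^2 z^(p+1) = x z Tr(x^p z) and Tr(x^p z) lies in F_p, the
   trace of the right-hand side factors as Tr(x^p z) Tr(x z). The Artin-Schreier
   map y |-> y^p - y is additive with kernel F_p and image the trace kernel, so
   each (x, z) with Tr(x^p z) Tr(x z) = 0 carries exactly p points and the
   others none. For x <> 0 the kernels of z |-> Tr(x z) and z |-> Tr(x^p z)
   are F_p-lines that coincide when x^p = +-x and otherwise meet only at 0,
   giving p or 2p - 1 admissible z; as p is odd, x^p = +-x holds for exactly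
   2p - 1 values of x. *)

Lemma card_roots_XnaddX (R : finIdomainType) n (a : R) : (1 < n)%N ->
  (#|[set x : R | (x ^+ n + a * x == 0)%R]| <= n)%N.
Proof.
move=> n_gt1; set q : {poly R} := 'X^n + a *: 'X.
have size_q : size q = n.+1.
  rewrite size_polyDl ?size_polyXn // (leq_ltn_trans (size_scale_leq _ _)) //.
  by rewrite size_polyX ltnS.
have q_neq0 : q != 0 by rewrite -size_poly_eq0 size_q.
rewrite -ltnS -size_q cardE; apply: max_poly_roots q_neq0 _ (enum_uniq _).
by apply/allP => x; rewrite mem_enum !inE /root !hornerE.
Qed.

Section AdditiveFibers.

Variables (U V : finZmodType) (f : U -> V).
Hypothesis fB : {morph f : a b / a - b}.

Lemma card_morph_fiber c :
  #|[set y | f y == c]| = if c \in [set f y | y : U] then #|[set y | f y == 0]| else 0%N.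
Proof.
case: imsetP => [[y0 _ ->] | no_preimage]; last first.
  apply: eq_card0 => y; rewrite !inE.
  by apply/negP => /eqP fy; apply: no_preimage; exists y.
rewrite -[RHS](card_imset _ (addIr y0)); apply: eq_card => y; rewrite inE.
apply/eqP/imsetP => [fy | [y' /[!inE] fy' ->]].
  by exists (y - y0); rewrite ?subrK // inE fB fy subrr.
by apply/eqP; rewrite -subr_eq0 -fB addrK.
Qed.

Lemma card_morph_dom : #|U| = (#|[set f y | y : U]| * #|[set y | f y == 0%R]|)%N.
Proof.
rewrite -[LHS]sum1_card (partition_big f xpredT) //= -sum_nat_const [RHS]big_mkcond /=.
apply: eq_bigr => c _; rewrite -card_morph_fiber -sum1_card.
by apply: eq_bigl => y; rewrite inE.
Qed.

End AdditiveFibers.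

Section FieldOfOrderPSquared.

Variables (p : nat) (F : finFieldType).
Hypotheses (p_prime : prime p) (cardF : #|F| = (p ^ 2)%N).

Let charF : p \in [pchar F] := card_finPcharP cardF p_prime.

Lemma exprpD (a b : F) : (a + b) ^+ p = a ^+ p + b ^+ p.
Proof. by rewrite -!(pFrobenius_autE charF) rmorphD. Qed.

Lemma exprpN (a : F) : (- a) ^+ p = - a ^+ p.
Proof. by rewrite -!(pFrobenius_autE charF) rmorphN. Qed.

Lemma exprpB (a b : F) : (a - b) ^+ p = a ^+ p - b ^+ p.
Proof. by rewrite exprpD exprpN. Qed.

Lemma exprpK (a : F) : a ^+ p ^+ p = a.
Proof. by rewrite -exprM mulnn -cardF expf_card. Qed.

Definition trace (w : F) := w ^+ p + w.

Definition artin_schreier (y : F) := y ^+ p - y.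

Lemma trace_fixed (w : F) : trace w ^+ p = trace w.
Proof. by rewrite exprpD exprpK addrC. Qed.

Lemma trace_artin_schreier (y : F) : trace (artin_schreier y) = 0.
Proof. by rewrite /trace /artin_schreier exprpB exprpK; ring. Qed.

Lemma artin_schreierB : {morph artin_schreier : a b / a - b}.
Proof. by move=> a b; rewrite /artin_schreier exprpB; ring. Qed.

Lemma trace_surface (x z : F) :
  trace (x ^+ p.+1 * z ^+ 2 + x ^+ 2 * z ^+ p.+1) = trace (x ^+ p * z) * trace (x * z).
Proof.
have -> : x ^+ p.+1 * z ^+ 2 + x ^+ 2 * z ^+ p.+1 = x * z * trace (x ^+ p * z).
  by rewrite /trace exprMn exprpK !exprS; ring.
by rewrite {1}/trace exprMn trace_fixed /trace; ring.
Qed.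

Lemma artin_schreier_ker_image :
  [/\ #|[set y | artin_schreier y == 0]| = p, #|[set c | trace c == 0]| = p
     & [set artin_schreier y | y : F] = [set c | trace c == 0]].
Proof.
have p_gt1 := prime_gt1 p_prime; have p_gt0 := prime_gt0 p_prime.
set kerAS := [set y | artin_schreier y == 0].
set kerTr := [set c | trace c == 0].
set imAS := [set artin_schreier y | y : F].
have ker_le : (#|kerAS| <= p)%N.
  rewrite (eq_card (B := [set y | y ^+ p + (-1) * y == 0])) ?card_roots_XnaddX //.
  by move=> y; rewrite !inE mulN1r.
have trace_ker_le : (#|kerTr| <= p)%N.
  rewrite (eq_card (B := [set c | c ^+ p + 1 * c == 0])) ?card_roots_XnaddX //.
  by move=> c; rewrite !inE mul1r.
have im_sub : imAS \subset kerTr.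
  by apply/subsetP => _ /imsetP [y _ ->]; rewrite inE trace_artin_schreier.
have im_le := subset_leq_card im_sub.
have card_dom : (p ^ 2 = #|imAS| * #|kerAS|)%N.
  by rewrite -cardF; exact: card_morph_dom artin_schreierB.
have im_le_p := leq_trans im_le trace_ker_le.
have card_ker : #|kerAS| = p.
  apply/eqP; rewrite eqn_leq ker_le -(leq_pmul2l p_gt0) mulnn card_dom.
  by rewrite leq_mul2r im_le_p orbT.
have card_im : #|imAS| = p.
  by apply/eqP; rewrite eqn_leq im_le_p -(leq_pmul2r p_gt0) mulnn card_dom card_ker leqnn.
have card_tr : #|kerTr| = p by apply/eqP; rewrite eqn_leq trace_ker_le -card_im.
by split=> //; apply/eqP; rewrite eqEcard im_sub card_tr card_im leqnn.
Qed.

Lemma card_artin_schreier_fiber c :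
  #|[set y | artin_schreier y == c]| = if trace c == 0 then p else 0%N.
Proof.
have [card_ker _ im_AS] := artin_schreier_ker_image.
by rewrite (card_morph_fiber artin_schreierB) card_ker im_AS inE.
Qed.

Lemma card_trace_ker_scaled (w : F) : w != 0 -> #|[set z | trace (w * z) == 0]| = p.
Proof.
move=> w_neq0; have [_ card_tr _] := artin_schreier_ker_image.
rewrite -[RHS]card_tr -(card_imset _ (mulfI w_neq0)); apply: eq_card => c.
rewrite [in RHS]inE; apply/imsetP/idP => [[z /[!inE] tr_wz ->] // | tr_c].
by exists (w^-1 * c); rewrite ?inE mulVKf.
Qed.

Lemma expr0p : (0 : F) ^+ p = 0.
Proof. by rewrite expr0n gtn_eqF ?prime_gt0. Qed.

Lemma trace0 : trace 0 = 0.
Proof. by rewrite /trace expr0p addr0. Qed.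

Definition trace_pair_ker (x : F) : {set F} :=
  [set z | (trace (x ^+ p * z) == 0) || (trace (x * z) == 0)].

Lemma trace_pair_ker0 : trace_pair_ker 0 = setT.
Proof. by apply/setP => z; rewrite !inE expr0p !mul0r trace0 eqxx. Qed.

Lemma card_trace_pair_ker (x : F) : x != 0 ->
  #|trace_pair_ker x| = if (x ^+ p == x) || (x ^+ p == - x) then p else (2 * p - 1)%N.
Proof.
move=> x_neq0; have xp_neq0 : x ^+ p != 0 by rewrite expf_neq0.
set K1 := [set z | trace (x ^+ p * z) == 0]; set K2 := [set z | trace (x * z) == 0].
have -> : trace_pair_ker x = K1 :|: K2 by apply/setP => z; rewrite !inE.
case: ifP => [x_sign | x_not_sign].
  suff -> : K1 = K2 by rewrite setUid card_trace_ker_scaled.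
  apply/setP => z; rewrite !inE; case/orP: x_sign => /eqP -> //.
  by rewrite mulNr /trace exprpN -opprD oppr_eq0.
suff K1K2 : K1 :&: K2 = [set 0].
  by rewrite cardsU !card_trace_ker_scaled // K1K2 cards1 addnn -mul2n.
apply/setP => z; rewrite !inE; apply/andP/eqP => [[/eqP tr1 /eqP tr2] | ->]; last first.
  by rewrite !mulr0 trace0.
have : z * ((x ^+ p - x) * (x ^+ p + x)) = x ^+ p * trace (x ^+ p * z) - x * trace (x * z).
  by rewrite /trace !exprMn exprpK; ring.
rewrite tr1 tr2 !mulr0 subrr => /eqP.
by rewrite !mulf_eq0 subr_eq0 addr_eq0 x_not_sign orbF => /eqP.
Qed.

Definition frobenius_sign_fixed : {set F} := [set x | (x ^+ p == x) || (x ^+ p == - x)].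

Lemma card_frobenius_sign_fixed : odd p -> #|frobenius_sign_fixed| = (2 * p - 1)%N.
Proof.
move=> p_odd; have [card_ker card_tr _] := artin_schreier_ker_image.
have -> : frobenius_sign_fixed = [set y | artin_schreier y == 0] :|: [set c | trace c == 0].
  by apply/setP => x; rewrite !inE subr_eq0 addr_eq0.
suff ker_meet : [set y | artin_schreier y == 0] :&: [set c | trace c == 0] = [set 0].
  by rewrite cardsU card_ker card_tr ker_meet cards1 addnn -mul2n.
apply/setP => x; rewrite !inE; apply/andP/eqP => [[] | ->]; last first.
  by rewrite trace0 /artin_schreier expr0p subrr.
rewrite subr_eq0 => /eqP xp_x; rewrite /trace xp_x -mulr2n -mulr_natl mulf_eq0.
have p_neq2 : p != 2%N by apply: contraTneq p_odd => ->.
by rewrite -(dvdn_pcharf charF) dvdn_prime2 // (negbTE p_neq2) => /eqP.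
Qed.

Lemma card_S_points : #|S_points F p| = (p * \sum_(x : F) #|trace_pair_ker x|)%N.
Proof.
transitivity (\sum_(x : F) \sum_(y : F) \sum_(z : F) (onS p x y z : nat))%N.
  rewrite -sum1_card big_mkcond pair_bigA pair_bigA /=.
  by apply: eq_bigr => -[[x y] z] _; rewrite inE.
rewrite big_distrr /=; apply: eq_bigr => x _.
rewrite exchange_big -sum1_card big_distrr [RHS]big_mkcond /=; apply: eq_bigr => z _.
transitivity #|[set y | artin_schreier y == x ^+ p.+1 * z ^+ 2 + x ^+ 2 * z ^+ p.+1]|.
  by rewrite -sum1_card [RHS]big_mkcond; apply: eq_bigr => y _; rewrite inE.
by rewrite card_artin_schreier_fiber trace_surface mulf_eq0 inE muln1.
Qed.

Lemma sum_card_trace_pair_ker : odd p ->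
  (\sum_(x : F) #|trace_pair_ker x| + p.-1 * (2 * p - 1)
   = p ^ 2 * (2 * p - 1) + (p ^ 2 - p))%N.
Proof.
move=> p_odd; have p_gt1 := prime_gt1 p_prime.
set B := frobenius_sign_fixed.
(* Adding p - 1 on B makes every term equal to 2p - 1, except at x = 0. *)
have shifted x : (#|trace_pair_ker x| + p.-1 * (x \in B)
                  = 2 * p - 1 + (p ^ 2 - p) * (x == 0%R))%N.
  have [-> | x_neq0] := eqVneq x 0.
    by rewrite trace_pair_ker0 cardsT cardF inE expr0p eqxx; nia.
  by rewrite card_trace_pair_ker // inE; case: ifP => _; nia.
have sum_B : (\sum_(x : F) (x \in B : nat))%N = #|B|.
  by rewrite -sum1_card [RHS]big_mkcond; apply: eq_bigr => y _; case: (y \in B).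
have sum_0 : (\sum_(x : F) (x == 0%R : nat))%N = 1%N.
  by rewrite (bigD1 0) //= eqxx big1 // => y /negbTE ->.
have summed : (\sum_(x : F) (#|trace_pair_ker x| + p.-1 * (x \in B))
               = \sum_(x : F) (2 * p - 1 + (p ^ 2 - p) * (x == 0%R)))%N.
  by apply: eq_bigr => x _; exact: shifted.
move: summed; rewrite !big_split /= -!big_distrr /=.
by rewrite sum_B sum_0 sum_nat_const -[#|xpredT|]/#|F| cardF card_frobenius_sign_fixed // muln1.
Qed.

End FieldOfOrderPSquared.

Lemma surface_count_arith (p N : nat) : (1 < p)%N ->
  (N + p.-1 * (2 * p - 1) = p ^ 2 * (2 * p - 1) + (p ^ 2 - p))%N ->
  (p * N = p * (2 * (p - 1) ^ 3 + 2 * (p - 1) ^ 2 + 2 * p ^ 2 - 1))%N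
  /\ (p * N = 2 * p ^ 4 - 2 * p ^ 3 + 2 * p ^ 2 - p)%N.
Proof.
move=> p_gt1; have [q ->] : exists q, p = q.+2 by exists p.-2; lia.
rewrite !expnS expn0 !muln1 => sum_eq.
have -> : N = (2 * q * q * q + 10 * q * q + 18 * q + 11)%N by nia.
split; nia.
Qed.

Theorem proposition4p3 (p : nat) (hp : prime p) (hodd : odd p)
  (F : finFieldType) (hF : #|F| = (p ^ 2)%N) :
  #|S_points F p| = (p * (2 * (p - 1) ^ 3 + 2 * (p - 1) ^ 2 + 2 * p ^ 2 - 1))%N
  /\ #|S_points F p| = (2 * p ^ 4 - 2 * p ^ 3 + 2 * p ^ 2 - p)%N.
Proof.
rewrite (card_S_points hp hF).
exact: surface_count_arith (prime_gt1 hp) (sum_card_trace_pair_ker hp hF hodd).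
Qed.
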